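(* Let $G$ be a finite, simple, connected graph with $res_{wt}(G)=k$. Then the maximum degree of $G$ satisfies $\Delta(G)\le 2^{k-1}+k-1$.
   Context: $d(x,y)$ is the shortest-path distance. A set $W\subseteq V(G)$ is a resolving set if for every two distinct vertices $y,z$ there is $x\in W$ with $d(y,x)\ne d(z,x)$. A set $W$ is a weak total resolving set (WTR-set) if $W$ is resolving and, for every $w\in W$ and every $x\in V(G)\setminus W$, there is $w'\in W\setminus\{w\}$ with $d(x,w')\ne d(w,w')$. The weak total resolving number $res_{wt}(G)$ is the minimum positive integer $r$ such that every set of $r$ vertices of $G$ is a WTR-set for $G$. *)

From mathcomp Require Import all_boot.
Set Implicit Arguments. Unset Strict Implicit. Unset Printing Implicit Defensive.

Section Graph.
Variables (T : finType) (e : rel T).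

Definition simple_graph := symmetric e /\ irreflexive e.
Definition connected_graph := forall x y : T, connect e x y.

Definition walkn (x y : T) (n : nat) : bool :=
  [exists p : n.-tuple T, path e x p && (last x p == y)].

(* shortest-path distance: least n (< #|T|) such that a walk of length n
   from x to y exists; in a connected graph it is the usual distance. *)
Definition dist (x y : T) : nat := find (walkn x y) (iota 0 #|T|).

Definition resolving (W : {set T}) : Prop :=
  forall y z : T, y != z -> exists2 x, x \in W & dist y x != dist z x.

Definition WTR (W : {set T}) : Prop :=
  resolving W /\
  forall w x, w \in W -> x \notin W ->
    exists2 w', w' \in W :\ w & dist x w' != dist w w'.

Definition all_WTR (r : nat) : Prop := forall W : {set T}, #|W| = r -> WTR W.

Definition res_wt_eq (k : nat) : Prop :=
  0 < k /\ all_WTR k /\ (forall r, 0 < r -> r < k -> ~ all_WTR r).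

Definition max_degree : nat := \max_(v : T) #|[set u | e v u]|.

End Graph.

From mathcomp Require Import all_boot zify.

Set Implicit Arguments. Unset Strict Implicit. Unset Printing Implicit Defensive.

(* Let v be any vertex and S a set of k - 1 of its neighbours, so that
   W = v |: S is resolving.  Every neighbour x of v outside W is at distance 1
   from v and at distance 1 or 2 from each w in S, since x and w have v as a
   common neighbour.  So the distance vector of x to W is determined by the
   subset of S adjacent to x, and resolvability makes x |-> that subset
   injective: at most 2 ^ (k - 1) neighbours of v lie outside W, and at most
   k - 1 lie inside it. *)

Lemma subset_of_card (T : finType) (A : {set T}) n :
  n <= #|A| -> exists2 S : {set T}, S \subset A & #|S| = n.
Proof.
case/card_geqP=> s [uniq_s size_s sA]; exists [set x in s].
  by apply/subsetP=> x; rewrite inE => /sA.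
by rewrite cardsE (card_uniqP uniq_s) size_s.
Qed.

Section Distance.
Variables (T : finType) (e : rel T).

Lemma dist_le_walkn x y m : walkn e x y m -> m < #|T| -> dist e x y <= m.
Proof.
move=> walk_m m_lt; rewrite /dist; case: leqP => // lt_m.
by have := before_find 0 lt_m; rewrite nth_iota // add0n walk_m.
Qed.

Lemma dist_gt0 x y : x != y -> 0 < dist e x y.
Proof.
move=> xy; rewrite lt0n; apply: contra xy => /eqP dist0.
have T_gt0 : 0 < #|T| by apply/card_gt0P; exists x.
have has_walk : has (walkn e x y) (iota 0 #|T|).
  by rewrite has_find size_iota -/(dist e x y) dist0.
have := nth_find 0 has_walk; rewrite -/(dist e x y) dist0 nth_iota // add0n.
by case/existsP=> p /andP[_]; rewrite (tuple0 p).
Qed.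

Hypotheses (e_sym : symmetric e) (e_irr : irreflexive e).

Definition neighbors (v : T) : {set T} := [set u | e v u].

Lemma adj_neq x y : e x y -> x != y.
Proof. by apply: contraTneq => ->; rewrite e_irr. Qed.

Lemma dist_adj x y : e x y -> dist e x y = 1.
Proof.
move=> xy; apply/eqP; rewrite eqn_leq dist_gt0 ?adj_neq // andbT.
apply: dist_le_walkn.
  by apply/existsP; exists [tuple y]; rewrite /= xy eqxx.
by apply/card_gt1P; exists x, y; rewrite adj_neq.
Qed.

Lemma dist_common_neighbor v x y :
  e v x -> e v y -> x != y -> 0 < dist e x y <= 2.
Proof.
move=> vx vy xy; rewrite dist_gt0 //=; apply: dist_le_walkn.
  by apply/existsP; exists [tuple v; y]; rewrite /= eqxx e_sym vx vy.
apply/card_gt2P; exists v, x, y; split=> //.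
by rewrite adj_neq // xy eq_sym adj_neq.
Qed.

Section ResolvingStar.
Variables (v : T) (S : {set T}).
Hypotheses (S_nbhd : S \subset neighbors v) (res : resolving e (v |: S)).

Definition adj_pattern (x : T) : {set T} := [set w in S | dist e x w == 1].

Lemma adj_pattern_inj : {in neighbors v :\: (v |: S) &, injective adj_pattern}.
Proof.
move=> x y; rewrite !inE !negb_or.
move=> /andP[/andP[_ xS] vx] /andP[/andP[_ yS] vy] same_pattern.
apply/eqP; apply: contraT => xy.
have [w /setU1P[->|wS] dist_neq] := res xy.
  by rewrite !dist_adj 1?e_sym ?eqxx in dist_neq.
have vw : e v w by have := subsetP S_nbhd w wS; rewrite inE.
have xw : x != w by apply: contraNneq xS => ->.
have yw : y != w by apply: contraNneq yS => ->.
have : (w \in adj_pattern x) = (w \in adj_pattern y) by rewrite same_pattern.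
rewrite !inE wS /=.
(* both distances lie in {1, 2}, so agreeing on "== 1" makes them equal *)
move: dist_neq (dist_common_neighbor vx vw xw) (dist_common_neighbor vy vw yw).
by case: eqP; case: eqP; lia.
Qed.

Lemma card_neighbors_outside : #|neighbors v :\: (v |: S)| <= 2 ^ #|S|.
Proof.
rewrite -(card_in_imset adj_pattern_inj) -card_powerset.
apply/subset_leq_card/subsetP=> _ /imsetP[x _ ->].
by rewrite inE; apply/subsetP=> w; rewrite inE => /andP[].
Qed.

Lemma card_neighbors_le : #|neighbors v| <= 2 ^ #|S| + #|S|.
Proof.
rewrite -(cardsID (v |: S)) addnC leq_add ?card_neighbors_outside //.
apply/subset_leq_card/subsetP=> x; rewrite !inE => /andP[vx /predU1P[xv|//]].
by rewrite xv e_irr in vx.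
Qed.

End ResolvingStar.

End Distance.

Theorem theorem7 (T : finType) (e : rel T) (k : nat) :
  simple_graph e -> connected_graph e -> res_wt_eq e k ->
  max_degree e <= 2 ^ (k - 1) + k - 1.
Proof.
move=> [e_sym e_irr] _ [k_gt0 [all_WTR_k _]].
apply/bigmax_leqP=> v _; rewrite -/(neighbors e v).
have [small|large] := ltnP #|neighbors e v| (k - 1).
  by have := expn_gt0 2 (k - 1); lia.
have [S S_nbhd card_S] := subset_of_card large.
have vS : v \notin S by apply/negP=> /(subsetP S_nbhd); rewrite inE e_irr.
have [res _] : WTR e (v |: S) by apply: all_WTR_k; rewrite cardsU1 vS card_S; lia.
by have := card_neighbors_le e_sym e_irr S_nbhd res; rewrite card_S; lia.
Qed.
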